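(* Let $a,b,c>0$. Let $B(a,b,c)$ be the semi-infinite matrix indexed by $j,k\in\mathbb{Z}_{+}$ with entries \[ B(a,b,c)_{j,k}=\frac{\Gamma(j+k+a)}{\Gamma(j+k+b+c)}\sqrt{\frac{\Gamma(j+b)\Gamma(j+c)\Gamma(k+b)\Gamma(k+c)}{\Gamma(j+a)\,j!\,\Gamma(k+a)\,k!}}, \] and let $T(a,b,c)$ be the symmetric Jacobi matrix indexed by $\mathbb{Z}_{+}$ with entries \[ T_{j,j}=j\,(j+c-1)+(j+a)(j+b),\qquad T_{j,j+1}=T_{j+1,j}=-\sqrt{(j+1)(j+a)(j+b)(j+c)}, \] and $T_{j,k}=0$ if $|j-k|\ge 2$. Then $B(a,b,c)$ and $T(a,b,c)$ commute (as matrices, the products being well defined entrywise since $T$ is tridiagonal).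
   Context: $\mathbb{Z}_{+}=\{0,1,2,\ldots\}$ and $\Gamma$ is Euler's Gamma function. *)

From Stdlib Require Import Reals Factorial.
From Coquelicot Require Import Coquelicot.
Open Scope R_scope.

Definition Gamma (x : R) : R :=
  RInt_gen (fun t => Rpower t (x - 1) * exp (- t)) (at_right 0) (Rbar_locally p_infty).

Definition Bmat (a b c : R) (j k : nat) : R :=
  Gamma (INR j + INR k + a) / Gamma (INR j + INR k + b + c) *
  sqrt ((Gamma (INR j + b) * Gamma (INR j + c) * Gamma (INR k + b) * Gamma (INR k + c)) /
        (Gamma (INR j + a) * INR (fact j) * Gamma (INR k + a) * INR (fact k))).

Definition Tmat (a b c : R) (j k : nat) : R :=
  if Nat.eqb j k then INR j * (INR j + c - 1) + (INR j + a) * (INR j + b)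
  else if Nat.eqb k (S j) then - sqrt ((INR j + 1) * (INR j + a) * (INR j + b) * (INR j + c))
  else if Nat.eqb j (S k) then - sqrt ((INR k + 1) * (INR k + a) * (INR k + b) * (INR k + c))
  else 0.

(* When one factor is tridiagonal (here T) and N >= max(j,k)+1, this is the full
   (entrywise well-defined) product entry, since all omitted terms vanish. *)
Definition matmul_upto (A C : nat -> nat -> R) (N j k : nat) : R :=
  sum_f_R0 (fun l => A j l * C l k) N.

From Stdlib Require Import Reals Factorial Lra Lia.
From Coquelicot Require Import Coquelicot.
Open Scope R_scope.

(* Write B_{jk} = h(j+k) sqrt(w_j w_k) with h(s) = Γ(s+a)/Γ(s+b+c) and
   w_j = Γ(j+b)Γ(j+c)/(Γ(j+a) j!).  By Γ(x+1) = xΓ(x), the ratio w_{j+1}/w_j is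
   (j+b)(j+c)/((j+a)(j+1)), whose square root times (j+a)(j+1) is exactly the
   off-diagonal entry of T, and h(s+1) = h(s)(s+a)/(s+b+c).  Hence
   (BT)_{jk} = sqrt(w_j w_k) h(j+k-1) R(j,k) for a rational function R.  As B and
   T are symmetric, (TB)_{jk} = (BT)_{kj}, and commutation reduces to the rational
   identity R(j,k) = R(k,j).  The functional equation of Γ comes from integrating
   t^x e^{-t} by parts, once the improper integral is shown to converge (Cauchy
   criterion at 0 and at +oo, dominating by t^{x-1} and by C/t^2). *)

Lemma pow_div_fact_le_exp t n : 0 <= t -> t ^ n / INR (fact n) <= exp t.
Proof.
  intros Ht. eapply Rle_trans; [|apply (exp_ge_taylor t n Ht)].
  destruct n as [|n]; [simpl; lra|].
  rewrite tech5. enough (0 <= sum_f_R0 (fun k => t ^ k / INR (fact k)) n) by lra.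
  apply cond_pos_sum. intros k. apply Rmult_le_pos; [now apply pow_le|].
  apply Rlt_le, Rinv_0_lt_compat, lt_0_INR, lt_O_fact.
Qed.

Lemma mul_exp_neg_le u t : 0 <= u -> 0 <= t -> u * exp (- t) <= u.
Proof.
  intros Hu Ht. rewrite <- (Rmult_1_r u) at 2. apply Rmult_le_compat_l; [exact Hu|].
  rewrite <- exp_0. destruct Ht as [Ht | <-]; [apply Rlt_le, exp_increasing; lra | rewrite Ropp_0; lra].
Qed.

Lemma Rpower_exp_le_inv_sqr y :
  exists C, 0 < C /\ forall t, 1 <= t -> Rpower t y * exp (- t) <= C / t ^ 2.
Proof.
  destruct (INR_unbounded y) as [n Hn].
  set (C := INR (fact (n + 2))).
  assert (HC : 0 < C) by apply lt_0_INR, lt_O_fact.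
  exists C. split; [exact HC|]. intros t Ht.
  assert (Hpow : Rpower t y <= t ^ n).
  { rewrite <- Rpower_pow by lra. apply Rle_Rpower; lra. }
  assert (Hexp : exp (- t) <= C / t ^ (n + 2)).
  { rewrite exp_Ropp, <- Rinv_div. apply Rinv_le_contravar.
    - apply Rdiv_lt_0_compat; [apply pow_lt|]; lra.
    - apply pow_div_fact_le_exp. lra. }
  replace (C / t ^ 2) with (t ^ n * (C / t ^ (n + 2)))
    by (rewrite pow_add; field; split; [lra | apply pow_nonzero; lra]).
  apply Rmult_le_compat; [apply Rlt_le, exp_pos | apply Rlt_le, exp_pos | exact Hpow | exact Hexp].
Qed.

Lemma Rpower_lt_near_0 x eps : 0 < x -> 0 < eps ->
  exists d, 0 < d /\ forall t, 0 < t < d -> Rpower t x < eps.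
Proof.
  intros Hx He. exists (Rpower eps (/ x)). split; [apply exp_pos|].
  intros t Ht. replace eps with (Rpower (Rpower eps (/ x)) x).
  - apply Rlt_Rpower_l; lra.
  - rewrite Rpower_mult, Rinv_l, Rpower_1 by lra. reflexivity.
Qed.

Lemma at_right_0_lt d : 0 < d -> at_right 0 (fun t => 0 < t < d).
Proof.
  intros Hd. exists (mkposreal d Hd). intros t Ht Ht0. split; [exact Ht0|].
  change (Rabs (t - 0) < d) in Ht. rewrite Rminus_0_r, Rabs_pos_eq in Ht; lra.
Qed.

Lemma filter_prod_0_infty (P : R -> R -> Prop) d K : 0 < d ->
  (forall p q, 0 < p < d -> K < q -> P p q) ->
  filter_prod (at_right 0) (Rbar_locally p_infty) (fun pq => P (fst pq) (snd pq)).
Proof.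
  intros Hd HP. apply Filter_prod with (fun p => 0 < p < d) (fun q => K < q).
  - now apply at_right_0_lt.
  - now exists K.
  - exact HP.
Qed.

Lemma abs_RInt_le_primitive (f g G : R -> R) p q : p <= q -> ex_RInt f p q ->
  (forall t, p <= t <= q -> is_derive G t (g t)) ->
  (forall t, p <= t <= q -> continuous g t) ->
  (forall t, p < t < q -> 0 <= f t <= g t) ->
  Rabs (RInt f p q) <= G q - G p.
Proof.
  intros Hpq Hf HG Hg Hfg.
  assert (Hint : is_RInt g p q (G q - G p)).
  { apply (is_RInt_derive G g); rewrite Rmin_left, Rmax_right by exact Hpq; assumption. }
  rewrite Rabs_pos_eq by (apply RInt_ge_0; try assumption; intros; apply Hfg; assumption).
  rewrite <- (is_RInt_unique _ _ _ _ Hint).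
  apply RInt_le; try assumption; [eexists; exact Hint | intros; apply Hfg; assumption].
Qed.

Lemma ex_RInt_gen_0_infty (f : R -> R) :
  (forall p q, 0 < p -> 0 < q -> ex_RInt f p q) ->
  (forall eps, 0 < eps -> exists d, 0 < d /\
     forall p q, 0 < p <= q -> q < d -> Rabs (RInt f p q) <= eps) ->
  (forall eps, 0 < eps -> exists K, 0 < K /\
     forall p q, K < p <= q -> Rabs (RInt f p q) <= eps) ->
  ex_RInt_gen f (at_right 0) (Rbar_locally p_infty).
Proof.
  intros Hloc Hnear0 Hnear_infty.
  assert (Hswap : forall (S : R -> Prop) eps, (forall t, S t -> 0 < t) ->
            (forall p q, S p -> S q -> p <= q -> Rabs (RInt f p q) <= eps) ->
            forall p q, S p -> S q -> Rabs (RInt f p q) <= eps).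
  { intros S eps HS H p q Hp Hq. destruct (Rle_or_lt p q) as [Hpq | Hqp]; [now apply H|].
    rewrite <- opp_RInt_swap by (apply Hloc; apply HS; assumption).
    change (Rabs (- RInt f q p) <= eps). rewrite Rabs_Ropp. apply H; try assumption; lra. }
  apply (filterlimi_locally_cauchy (U := R_CompleteSpace)
           (fun pq l => is_RInt f (fst pq) (snd pq) l)).
  - apply (filter_prod_0_infty (fun p q => (exists l, is_RInt f p q l) /\
             forall l1 l2, is_RInt f p q l1 -> is_RInt f p q l2 -> l1 = l2) 1 0); [lra|].
    intros p q Hp Hq. split.
    + apply Hloc; lra.
    + intros l1 l2 H1 H2. now rewrite <- (is_RInt_unique _ _ _ _ H1), <- (is_RInt_unique _ _ _ _ H2).
  - intros eps. pose proof (cond_pos eps) as He.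
    destruct (Hnear0 (eps / 4)) as [d [Hd Hsmall]]; [lra|].
    destruct (Hnear_infty (eps / 4)) as [K [HK Hlarge]]; [lra|].
    exists (fun pq => 0 < fst pq < d /\ K < snd pq). split.
    { now apply (filter_prod_0_infty (fun p q => 0 < p < d /\ K < q) d K). }
    intros [u1 u2] [v1 v2] [Hu1 Hu2] [Hv1 Hv2] lu lv Hu Hv. simpl in *.
    apply (is_RInt_unique (V := R_CompleteNormedModule)) in Hu, Hv. subst lu lv.
    assert (H1 : Rabs (RInt f v1 u1) <= eps / 4).
    { apply (Hswap (fun t => 0 < t < d)); [intros t Ht; lra | | lra | lra].
      intros p q Hp Hq Hpq. apply Hsmall; lra. }
    assert (H2 : Rabs (RInt f u2 v2) <= eps / 4).
    { apply (Hswap (fun t => K < t)); [intros t Ht; lra | | lra | lra].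
      intros p q Hp Hq Hpq. apply Hlarge; lra. }
    change (Rabs (RInt f v1 v2 - RInt f u1 u2) < eps).
    rewrite <- (RInt_Chasles f v1 u1 v2), <- (RInt_Chasles f u1 u2 v2) by (apply Hloc; lra).
    change (Rabs (RInt f v1 u1 + (RInt f u1 u2 + RInt f u2 v2) - RInt f u1 u2) < eps).
    replace (RInt f v1 u1 + (RInt f u1 u2 + RInt f u2 v2) - RInt f u1 u2)
      with (RInt f v1 u1 + RInt f u2 v2) by ring.
    eapply Rle_lt_trans; [apply Rabs_triang | lra].
Qed.

Definition Gamma_integrand (x t : R) : R := Rpower t (x - 1) * exp (- t).

Lemma Gamma_integrand_pos x t : 0 < Gamma_integrand x t.
Proof. apply Rmult_lt_0_compat; apply exp_pos. Qed.

Lemma Gamma_integrand_continuous x t : 0 < t -> continuous (Gamma_integrand x) t.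
Proof.
  intros Ht. apply (ex_derive_continuous (V := R_NormedModule)).
  unfold Gamma_integrand, Rpower. auto_derive. exact Ht.
Qed.

Lemma ex_RInt_Gamma_integrand x p q : 0 < p -> 0 < q -> ex_RInt (Gamma_integrand x) p q.
Proof.
  intros Hp Hq. apply (ex_RInt_continuous (V := R_CompleteNormedModule)). intros t [Ht _].
  apply Gamma_integrand_continuous. eapply Rlt_le_trans; [|exact Ht].
  now apply Rmin_glb_lt.
Qed.

Lemma Gamma_integrand_Cauchy_near_0 x eps : 0 < x -> 0 < eps -> exists d, 0 < d /\
  forall p q, 0 < p <= q -> q < d -> Rabs (RInt (Gamma_integrand x) p q) <= eps.
Proof.
  intros Hx He. destruct (Rpower_lt_near_0 x (x * eps) Hx) as [d [Hd Hsmall]]; [nra|].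
  exists d. split; [exact Hd|]. intros p q Hpq Hqd.
  eapply Rle_trans.
  - apply (abs_RInt_le_primitive _ (fun t => Rpower t (x - 1)) (fun t => Rpower t x / x));
      try lra; [apply ex_RInt_Gamma_integrand; lra | | |].
    + intros t Ht. unfold Rpower. auto_derive; [lra|].
      replace (x * ln t) with ((x - 1) * ln t + ln t) by ring.
      rewrite exp_plus, exp_ln by lra. field. split; lra.
    + intros t Ht. apply (ex_derive_continuous (V := R_NormedModule)). unfold Rpower. auto_derive. lra.
    + intros t Ht. split; [apply Rlt_le, Gamma_integrand_pos|].
      apply mul_exp_neg_le; [apply Rlt_le, exp_pos | lra].
  - assert (Hp : 0 < Rpower p x) by apply exp_pos.
    assert (Hq : Rpower q x < x * eps) by (apply Hsmall; lra).
    apply (Rmult_le_reg_l x); [exact Hx|]. field_simplify; lra.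
Qed.

Lemma Gamma_integrand_Cauchy_near_infty x eps : 0 < eps -> exists K, 0 < K /\
  forall p q, K < p <= q -> Rabs (RInt (Gamma_integrand x) p q) <= eps.
Proof.
  intros He. destruct (Rpower_exp_le_inv_sqr (x - 1)) as [C [HC Htail]].
  exists (Rmax 1 (C / eps)). split; [apply Rlt_le_trans with 1; [lra | apply Rmax_l]|].
  intros p q [Hp Hpq].
  assert (Hp1 : 1 < p) by (eapply Rle_lt_trans; [apply Rmax_l | exact Hp]).
  assert (HpC : C / eps < p) by (eapply Rle_lt_trans; [apply Rmax_r | exact Hp]).
  eapply Rle_trans.
  - apply (abs_RInt_le_primitive _ (fun t => C / t ^ 2) (fun t => - C / t));
      try lra; [apply ex_RInt_Gamma_integrand; lra | | |].
    + intros t Ht. auto_derive; [lra|]. field. lra.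
    + intros t Ht. apply (ex_derive_continuous (V := R_NormedModule)). auto_derive. apply Rgt_not_eq. nra.
    + intros t Ht. split; [apply Rlt_le, Gamma_integrand_pos | apply Htail; lra].
  - assert (0 < C / q) by (apply Rdiv_lt_0_compat; lra).
    assert (C / p < eps) by (apply Rlt_div_l in HpC; [apply Rlt_div_l; nra | lra]).
    unfold Rdiv in *. lra.
Qed.

Lemma ex_RInt_gen_Gamma_integrand x : 0 < x ->
  ex_RInt_gen (Gamma_integrand x) (at_right 0) (Rbar_locally p_infty).
Proof.
  intros Hx. apply ex_RInt_gen_0_infty.
  - apply ex_RInt_Gamma_integrand.
  - intros eps He. now apply Gamma_integrand_Cauchy_near_0.
  - intros eps He. now apply Gamma_integrand_Cauchy_near_infty.
Qed.

Definition Gamma_boundary (x t : R) : R := - (Rpower t x * exp (- t)).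

Lemma is_derive_Gamma_boundary x t : 0 < t ->
  is_derive (Gamma_boundary x) t (Gamma_integrand (x + 1) t - x * Gamma_integrand x t).
Proof.
  intros Ht. unfold Gamma_boundary, Gamma_integrand, Rpower. auto_derive; [exact Ht|].
  replace (x + 1 - 1) with x by ring.
  replace (x * ln t) with ((x - 1) * ln t + ln t) by ring.
  rewrite exp_plus, exp_ln by exact Ht. field. lra.
Qed.

Lemma ball_0_Gamma_boundary x eps t : Rpower t x * exp (- t) < eps ->
  ball 0 eps (Gamma_boundary x t).
Proof.
  intros H. change (Rabs (Gamma_boundary x t - 0) < eps). unfold Gamma_boundary.
  rewrite Rminus_0_r, Rabs_Ropp, Rabs_pos_eq; [exact H|].
  apply Rlt_le, Rmult_lt_0_compat; apply exp_pos.
Qed.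

Lemma Gamma_boundary_lim_0 x : 0 < x -> filterlim (Gamma_boundary x) (at_right 0) (locally 0).
Proof.
  intros Hx. apply filterlim_locally. intros eps.
  destruct (Rpower_lt_near_0 x eps Hx (cond_pos eps)) as [d [Hd Hsmall]].
  apply (filter_imp (fun t => 0 < t < d)); [|now apply at_right_0_lt].
  intros t Ht. apply ball_0_Gamma_boundary.
  apply Rle_lt_trans with (Rpower t x); [|now apply Hsmall].
  apply mul_exp_neg_le; [apply Rlt_le, exp_pos | lra].
Qed.

Lemma Gamma_boundary_lim_infty x :
  filterlim (Gamma_boundary x) (Rbar_locally p_infty) (locally 0).
Proof.
  apply filterlim_locally. intros eps. pose proof (cond_pos eps) as He.
  destruct (Rpower_exp_le_inv_sqr x) as [C [HC Htail]].
  exists (Rmax 1 (C / eps)). intros t Ht.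
  assert (Ht1 : 1 < t) by (eapply Rle_lt_trans; [apply Rmax_l | exact Ht]).
  assert (HtC : C / eps < t) by (eapply Rle_lt_trans; [apply Rmax_r | exact Ht]).
  apply ball_0_Gamma_boundary. eapply Rle_lt_trans; [apply Htail; lra|].
  apply Rlt_div_l in HtC; [apply Rlt_div_l; [apply pow_lt|]; nra | lra].
Qed.

Lemma filter_prod_0_infty_between (P : R -> Prop) : (forall t, 0 < t -> P t) ->
  filter_prod (at_right 0) (Rbar_locally p_infty)
    (fun pq => forall t, Rmin (fst pq) (snd pq) <= t <= Rmax (fst pq) (snd pq) -> P t).
Proof.
  intros HP. apply (filter_prod_0_infty (fun p q => forall t, Rmin p q <= t <= Rmax p q -> P t) 1 0);
    [lra|]. intros p q Hp Hq t [Ht _]. apply HP.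
  eapply Rlt_le_trans; [|exact Ht]. apply Rmin_glb_lt; lra.
Qed.

Lemma Derive_Gamma_boundary x : forall t, 0 < t ->
  Derive (Gamma_boundary x) t = Gamma_integrand (x + 1) t - x * Gamma_integrand x t.
Proof. intros t Ht. now apply is_derive_unique, is_derive_Gamma_boundary. Qed.

Lemma Gamma_succ x : 0 < x -> Gamma (x + 1) = x * Gamma x.
Proof.
  intros Hx.
  assert (Hparts : is_RInt_gen (Derive (Gamma_boundary x))
                     (at_right 0) (Rbar_locally p_infty) (0 - 0)).
  { apply is_RInt_gen_Derive; [| | apply Gamma_boundary_lim_0, Hx | apply Gamma_boundary_lim_infty].
    - apply filter_prod_0_infty_between. intros t Ht.
      eexists. now apply is_derive_Gamma_boundary.
    - apply filter_prod_0_infty_between. intros t Ht.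
      apply (continuous_ext_loc _ (fun s => Gamma_integrand (x + 1) s - x * Gamma_integrand x s)).
      + assert (Ht2 : 0 < t / 2) by lra. exists (mkposreal _ Ht2). intros s Hs.
        change (Rabs (s - t) < t / 2) in Hs. apply Rabs_def2 in Hs.
        symmetry. apply Derive_Gamma_boundary. lra.
      + apply (continuous_minus (V := R_NormedModule)); [|apply (continuous_scal_r (V := R_NormedModule))];
          now apply Gamma_integrand_continuous. }
  pose proof (RInt_gen_correct _ (ex_RInt_gen_Gamma_integrand x Hx)) as HGamma.
  assert (HGamma1 : is_RInt_gen (Gamma_integrand (x + 1)) (at_right 0) (Rbar_locally p_infty)
                      (plus (0 - 0) (scal x (Gamma x)))).
  { apply (is_RInt_gen_ext (fun t => Derive (Gamma_boundary x) t + x * Gamma_integrand x t));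
      [|exact (is_RInt_gen_plus _ _ _ _ Hparts (is_RInt_gen_scal _ x _ HGamma))].
    apply (filter_imp (fun pq => forall t, Rmin (fst pq) (snd pq) <= t <= Rmax (fst pq) (snd pq) ->
                         Derive (Gamma_boundary x) t + x * Gamma_integrand x t = Gamma_integrand (x + 1) t)).
    - intros pq H t Ht. apply H; lra.
    - apply filter_prod_0_infty_between. intros t Ht. rewrite Derive_Gamma_boundary by exact Ht. ring. }
  change (RInt_gen (Gamma_integrand (x + 1)) (at_right 0) (Rbar_locally p_infty) = x * Gamma x).
  rewrite (is_RInt_gen_unique _ _ HGamma1). change (0 - 0 + x * Gamma x = x * Gamma x). ring.
Qed.

Lemma Gamma_S_INR y j : 0 < y -> Gamma (INR (S j) + y) = (INR j + y) * Gamma (INR j + y).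
Proof.
  intros Hy. rewrite S_INR, <- Gamma_succ by (pose proof (pos_INR j); lra). f_equal. ring.
Qed.

Lemma sum_f_R0_trunc (h : nat -> R) M N : (M <= N)%nat ->
  (forall l, (M < l)%nat -> h l = 0) -> sum_f_R0 h N = sum_f_R0 h M.
Proof.
  intros HMN Hh. induction HMN as [|N HMN IH]; [reflexivity|].
  rewrite tech5, IH, (Hh (S N)) by lia. ring.
Qed.

Lemma sum_f_R0_tridiagonal (h : nat -> R) k N : (S k <= N)%nat ->
  (forall l, (S l < k \/ S k < l)%nat -> h l = 0) ->
  sum_f_R0 h N = (match k with O => 0 | S k' => h k' end) + h k + h (S k).
Proof.
  intros HN Hh. rewrite (sum_f_R0_trunc h (S k) N) by (auto; intros; apply Hh; lia).
  destruct k as [|k]; [simpl; ring|]. rewrite !tech5.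
  destruct k as [|k]; [simpl; ring|]. rewrite tech5, (sum_eq_R0 h k) by (intros; apply Hh; lia). ring.
Qed.

Lemma Tmat_sym a b c j k : Tmat a b c j k = Tmat a b c k j.
Proof.
  unfold Tmat. destruct (Nat.eqb_spec j k) as [-> | Hjk]; [now rewrite Nat.eqb_refl|].
  rewrite (proj2 (Nat.eqb_neq k j)) by congruence.
  destruct (Nat.eqb_spec k (S j)), (Nat.eqb_spec j (S k)); subst; lia || reflexivity.
Qed.

Lemma Tmat_diag a b c k : Tmat a b c k k = INR k * (INR k + c - 1) + (INR k + a) * (INR k + b).
Proof. unfold Tmat. now rewrite Nat.eqb_refl. Qed.

Lemma Tmat_succ_r a b c k :
  Tmat a b c k (S k) = - sqrt ((INR k + 1) * (INR k + a) * (INR k + b) * (INR k + c)).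
Proof. unfold Tmat. rewrite (proj2 (Nat.eqb_neq k (S k))), Nat.eqb_refl by lia. reflexivity. Qed.

Lemma Tmat_far a b c l k : (S l < k \/ S k < l)%nat -> Tmat a b c l k = 0.
Proof.
  intros H. unfold Tmat.
  rewrite (proj2 (Nat.eqb_neq l k)), (proj2 (Nat.eqb_neq k (S l))), (proj2 (Nat.eqb_neq l (S k)))
    by lia. reflexivity.
Qed.

Lemma matmul_upto_transpose (A C : nat -> nat -> R) N j k :
  (forall j k, A j k = A k j) -> (forall j k, C j k = C k j) ->
  matmul_upto C A N j k = matmul_upto A C N k j.
Proof.
  intros HA HC. unfold matmul_upto. apply sum_eq. intros l _. rewrite HA, HC. ring.
Qed.

Lemma Bmat_sym a b c j k : Bmat a b c j k = Bmat a b c k j.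
Proof.
  unfold Bmat. rewrite (Rplus_comm (INR j) (INR k)). f_equal. f_equal.
  unfold Rdiv. f_equal; [ring | f_equal; ring].
Qed.

Section Commutation.

Variables a b c : R.
Hypotheses (ha : 0 < a) (hb : 0 < b) (hc : 0 < c).

Definition Bweight (j : nat) : R :=
  Gamma (INR j + b) * Gamma (INR j + c) / (Gamma (INR j + a) * INR (fact j)).

Definition Bweight_ratio (j : nat) : R :=
  (INR j + b) * (INR j + c) / ((INR j + a) * (INR j + 1)).

Definition Bhankel (s : R) : R := Gamma (s + a) / Gamma (s + b + c).

Lemma Bmat_eq j k : Bmat a b c j k = Bhankel (INR j + INR k) * sqrt (Bweight j * Bweight k).
Proof.
  unfold Bmat, Bhankel, Bweight. f_equal. f_equal. unfold Rdiv. rewrite !Rinv_mult. ring.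
Qed.

Lemma Bweight_succ j : Bweight (S j) = Bweight j * Bweight_ratio j.
Proof.
  unfold Bweight, Bweight_ratio. rewrite !Gamma_S_INR by assumption.
  rewrite fact_simpl, mult_INR, S_INR. unfold Rdiv. rewrite !Rinv_mult. ring.
Qed.

Lemma Bweight_ratio_pos j : 0 < Bweight_ratio j.
Proof.
  pose proof (pos_INR j). unfold Bweight_ratio.
  apply Rdiv_lt_0_compat; apply Rmult_lt_0_compat; lra.
Qed.

Lemma Bweight_mul_nonneg j k : 0 <= Bweight j * Bweight k.
Proof.
  assert (H0 : forall m, 0 <= Bweight 0 * Bweight m).
  { intros m. induction m as [|m IH]; [apply Rle_0_sqr|].
    rewrite Bweight_succ, <- Rmult_assoc.
    apply Rmult_le_pos; [exact IH | apply Rlt_le, Bweight_ratio_pos]. }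
  induction j as [|j IH]; [apply H0|].
  rewrite Bweight_succ, Rmult_assoc, (Rmult_comm (Bweight_ratio j)), <- Rmult_assoc.
  apply Rmult_le_pos; [exact IH | apply Rlt_le, Bweight_ratio_pos].
Qed.

Lemma sqrt_Bweight_succ_r j k :
  sqrt (Bweight j * Bweight (S k)) = sqrt (Bweight j * Bweight k) * sqrt (Bweight_ratio k).
Proof.
  rewrite Bweight_succ, <- Rmult_assoc. apply sqrt_mult;
    [apply Bweight_mul_nonneg | apply Rlt_le, Bweight_ratio_pos].
Qed.

Lemma sqrt_Tmat_offdiag k : sqrt ((INR k + 1) * (INR k + a) * (INR k + b) * (INR k + c)) =
  sqrt (Bweight_ratio k) * ((INR k + a) * (INR k + 1)).
Proof.
  pose proof (pos_INR k).
  replace ((INR k + 1) * (INR k + a) * (INR k + b) * (INR k + c)) with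
    (Bweight_ratio k * (((INR k + a) * (INR k + 1)) * ((INR k + a) * (INR k + 1))))
    by (unfold Bweight_ratio; field; split; lra).
  assert (Hak : 0 <= (INR k + a) * (INR k + 1)) by (apply Rmult_le_pos; lra).
  pose proof (Bweight_ratio_pos k).
  rewrite sqrt_mult, sqrt_square; [reflexivity | exact Hak | lra | now apply Rmult_le_pos].
Qed.

Lemma Bhankel_succ s : 0 <= s -> Bhankel (s + 1) = Bhankel s * (s + a) / (s + b + c).
Proof.
  intros Hs. unfold Bhankel.
  replace (s + 1 + a) with ((s + a) + 1) by ring.
  replace (s + 1 + b + c) with ((s + b + c) + 1) by ring.
  rewrite !Gamma_succ by lra. unfold Rdiv. rewrite !Rinv_mult. ring.
Qed.

Lemma Bmat_succ_r_mul_offdiag j k :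
  Bmat a b c j (S k) * sqrt ((INR k + 1) * (INR k + a) * (INR k + b) * (INR k + c)) =
  Bhankel (INR j + INR k + 1) * sqrt (Bweight j * Bweight k) * ((INR k + b) * (INR k + c)).
Proof.
  pose proof (pos_INR k).
  rewrite Bmat_eq, sqrt_Bweight_succ_r, sqrt_Tmat_offdiag, S_INR, Rplus_assoc.
  transitivity (Bhankel (INR j + (INR k + 1)) * sqrt (Bweight j * Bweight k) *
    (sqrt (Bweight_ratio k) * sqrt (Bweight_ratio k)) * ((INR k + a) * (INR k + 1))); [ring|].
  rewrite sqrt_sqrt by apply Rlt_le, Bweight_ratio_pos.
  unfold Bweight_ratio. field. split; lra.
Qed.

Lemma Bmat_mul_offdiag j k :
  Bmat a b c j k * sqrt ((INR k + 1) * (INR k + a) * (INR k + b) * (INR k + c)) =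
  Bhankel (INR j + INR k) * sqrt (Bweight j * Bweight (S k)) * ((INR k + a) * (INR k + 1)).
Proof. rewrite Bmat_eq, sqrt_Bweight_succ_r, sqrt_Tmat_offdiag. ring. Qed.

(* For [k = 0] the first term vanishes, whatever the junk value [Bhankel (INR j - 1)]. *)
Definition BT_coef (j k : nat) : R :=
  - Bhankel (INR j + INR k - 1) * (INR k * (INR k - 1 + a))
  + Bhankel (INR j + INR k) * (INR k * (INR k + c - 1) + (INR k + a) * (INR k + b))
  - Bhankel (INR j + INR k + 1) * ((INR k + b) * (INR k + c)).

Lemma matmul_upto_Bmat_Tmat j k N : (S k <= N)%nat ->
  matmul_upto (Bmat a b c) (Tmat a b c) N j k = sqrt (Bweight j * Bweight k) * BT_coef j k.
Proof.
  intros HN. unfold matmul_upto.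
  rewrite (sum_f_R0_tridiagonal _ k N HN) by (intros l Hl; rewrite Tmat_far by exact Hl; ring).
  rewrite Tmat_diag, Tmat_sym, Tmat_succ_r, Bmat_eq.
  replace (Bmat a b c j (S k) * _) with
    (- (Bmat a b c j (S k) * sqrt ((INR k + 1) * (INR k + a) * (INR k + b) * (INR k + c)))) by ring.
  rewrite Bmat_succ_r_mul_offdiag. unfold BT_coef.
  destruct k as [|k]; [simpl; ring|].
  rewrite Tmat_succ_r.
  replace (Bmat a b c j k * _) with
    (- (Bmat a b c j k * sqrt ((INR k + 1) * (INR k + a) * (INR k + b) * (INR k + c)))) by ring.
  rewrite Bmat_mul_offdiag, S_INR.
  replace (INR j + (INR k + 1) - 1) with (INR j + INR k) by ring. ring.
Qed.

Lemma BT_coef_sym j k : BT_coef j k = BT_coef k j.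
Proof.
  destruct (Nat.eq_dec j k) as [-> | Hjk]; [reflexivity|].
  assert (Hs : 1 <= INR j + INR k) by (rewrite <- plus_INR; apply (le_INR 1); lia).
  unfold BT_coef. rewrite (Rplus_comm (INR k) (INR j)).
  assert (H1 : Bhankel (INR j + INR k) = Bhankel (INR j + INR k - 1) *
                 (INR j + INR k - 1 + a) / (INR j + INR k - 1 + b + c)).
  { rewrite <- Bhankel_succ by lra. f_equal. ring. }
  rewrite (Bhankel_succ (INR j + INR k)), H1 by lra.
  field. split; lra.
Qed.

End Commutation.

Theorem mainTheorem2 (a b c : R) (ha : 0 < a) (hb : 0 < b) (hc : 0 < c) :
  forall (j k N : nat), (S j <= N)%nat -> (S k <= N)%nat ->
    matmul_upto (Bmat a b c) (Tmat a b c) N j k =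
    matmul_upto (Tmat a b c) (Bmat a b c) N j k.
Proof.
  intros j k N Hj Hk.
  rewrite (matmul_upto_transpose _ _ N j k (Bmat_sym a b c) (Tmat_sym a b c)).
  rewrite !matmul_upto_Bmat_Tmat by assumption.
  now rewrite (Rmult_comm (Bweight a b c k)), BT_coef_sym.
Qed.
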